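(* Let $d_1,d_2\ge1$ be integers and $s_1,s_2$ real numbers, and define $$h_a(x_1,x_2)=\int_{-1}^1(1+x_1z)^{d_1}(1+x_2z)^{d_2}\big(x_a(x_as_a-1)(1-z^2)+z(1-x_a^2)\big)\,dz,\qquad a=1,2.$$ If $s_1>1$ and $s_2<-1$, then there exist $x_1\in(0,1)$ and $x_2\in(-1,0)$ with $h_1(x_1,x_2)=0=h_2(x_1,x_2)$. *)

From Stdlib Require Import Reals.
From Coquelicot Require Import Coquelicot.
Open Scope R_scope.

Definition h_integrand (d1 d2 : nat) (x1 x2 xa sa z : R) : R :=
  (1 + x1 * z) ^ d1 * (1 + x2 * z) ^ d2 *
  (xa * (xa * sa - 1) * (1 - z ^ 2) + z * (1 - xa ^ 2)).

Definition h1 (d1 d2 : nat) (s1 : R) (x1 x2 : R) : R :=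
  RInt (fun z => h_integrand d1 d2 x1 x2 x1 s1 z) (-1) 1.

Definition h2 (d1 d2 : nat) (s2 : R) (x1 x2 : R) : R :=
  RInt (fun z => h_integrand d1 d2 x1 x2 x2 s2 z) (-1) 1.

(* Linearising at the origin, for small x1 >= 0 >= x2 one has
   h1 ~ 2/3 (d2 x2 + (d1 - 2) x1) up to O(x1 (x1 - x2)); the x2-term is kept
   exact (not only to first order) through the convexity estimate
   int_{-1}^{1} (1 + x2 z)^d2 z dz <= 2/3 d2 x2.  The substitution z -> -z turns
   h2 into -h1 with (d1, d2, s, x1, x2) replaced by (d2, d1, -s, -x2, -x1).
   Hence on the rectangle [d2 e, 1] x [-1, -d1 e], for e small, h1 < 0 on the left
   edge and h2 >= 0 on the top edge, while s1 > 1 gives h1 > 0 on x1 = 1 and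
   s2 < -1 gives h2 < 0 on x2 = -1, the integrand having a sign there.  The
   Poincare-Miranda theorem, proved from a parity (Sperner) lemma on a square
   grid and compactness, then yields a common zero. *)

From Stdlib Require Import Reals Lra Lia Bool Classical IndefiniteDescription.
From Coquelicot Require Import Coquelicot.

Local Open Scope nat_scope.

Inductive colour := red | green | blue.

Definition door (p q : colour) : bool :=
  match p, q with red, green | green, red => true | _, _ => false end.

Definition trichromatic (p q r : colour) : bool :=
  match p, q, r with
  | red, green, blue | red, blue, green | green, red, blue
  | green, blue, red | blue, red, green | blue, green, red => true
  | _, _, _ => false
  end.

Lemma door_parity_triangle p q r :
  xorb (xorb (door p q) (door q r)) (door p r) = trichromatic p q r.
Proof. destruct p, q, r; reflexivity. Qed.

Lemma trichromatic_has p q r : trichromatic p q r = true ->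
  forall C, p = C \/ q = C \/ r = C.
Proof. destruct p, q, r; try discriminate; intros _ []; auto. Qed.

Section Sperner.

Variable col : nat -> nat -> colour.

Fixpoint row_doors (j k : nat) : bool :=
  match k with
  | 0 => false
  | S k => xorb (row_doors j k) (door (col k j) (col (S k) j))
  end.

Definition strip_trichromatic (j i : nat) : bool :=
  trichromatic (col i j) (col (S i) j) (col (S i) (S j))
  || trichromatic (col i j) (col i (S j)) (col (S i) (S j)).

(* A triangle that is not trichromatic has an even number of doors, and each
   interior edge of the strip is shared by two triangles. *)
Lemma strip_doors_even j k :
  (forall i, i < k -> strip_trichromatic j i = false) ->
  xorb (xorb (row_doors j k) (row_doors (S j) k))
       (xorb (door (col 0 j) (col 0 (S j))) (door (col k j) (col k (S j))))
  = false.
Proof.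
  induction k as [|k IH]; intros Hstrip; simpl.
  - destruct (door (col 0 j) (col 0 (S j))); reflexivity.
  - assert (Hk := Hstrip k (Nat.lt_succ_diag_r k)).
    unfold strip_trichromatic in Hk; apply orb_false_elim in Hk as [T1 T2].
    rewrite <- door_parity_triangle in T1, T2.
    specialize (IH (fun i Hi => Hstrip i (Nat.lt_lt_succ_r _ _ Hi))).
    revert IH T1 T2.
    generalize (row_doors j k) (row_doors (S j) k) (door (col 0 j) (col 0 (S j)))
      (door (col k j) (col k (S j))) (door (col k j) (col (S k) j))
      (door (col (S k) j) (col (S k) (S j))) (door (col k j) (col (S k) (S j)))
      (door (col k (S j)) (col (S k) (S j))).
    intros [] [] [] [] [] [] [] []; simpl; congruence.
Qed.

Variable n : nat.
Hypothesis left_red : forall j, j <= n -> col 0 j = red.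
Hypothesis right_not_red : forall j, j <= n -> col n j <> red.
Hypothesis bottom_not_blue : forall i, i <= n -> col i 0 <> blue.
Hypothesis top_not_green : forall i, i <= n -> col i n <> green.

Lemma row_doors_bottom k : k <= n -> row_doors 0 k = door red (col k 0).
Proof.
  induction k as [|k IH]; intros Hk; simpl.
  - now rewrite left_red by lia.
  - rewrite IH by lia.
    pose proof (bottom_not_blue k ltac:(lia)); pose proof (bottom_not_blue (S k) Hk).
    destruct (col k 0), (col (S k) 0); simpl; congruence.
Qed.

Lemma row_doors_top k : k <= n -> row_doors n k = false.
Proof.
  induction k as [|k IH]; intros Hk; simpl; auto.
  rewrite IH by lia.
  pose proof (top_not_green k ltac:(lia)); pose proof (top_not_green (S k) Hk).
  destruct (col k n), (col (S k) n); simpl; congruence.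
Qed.

(* The number of doors along row j stays odd as long as no strip below it
   contains a trichromatic triangle; it is odd on the bottom row and even on
   the top row. *)
Lemma exists_strip_trichromatic :
  exists i j, i < n /\ j < n /\ strip_trichromatic j i = true.
Proof.
  assert (Hrows : forall j, j <= n ->
    (exists i j', i < n /\ j' < j /\ strip_trichromatic j' i = true)
    \/ row_doors j n = true).
  { induction j as [|j IH]; intros Hj.
    - right. rewrite row_doors_bottom by lia.
      pose proof (right_not_red 0 ltac:(lia)); pose proof (bottom_not_blue n (le_n n)).
      destruct (col n 0); simpl; congruence.
    - destruct (IH ltac:(lia)) as [(i & j' & Hi & Hj' & Ht) | Hodd].
      { left; exists i, j'; repeat split; auto; lia. }
      destruct (classic (exists i, i < n /\ strip_trichromatic j i = true))
        as [(i & Hi & Ht) | Hnone].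
      { left; exists i, j; repeat split; auto. }
      right.
      assert (Heven : forall i, i < n -> strip_trichromatic j i = false).
      { intros i Hi; apply not_true_is_false; intro Ht; apply Hnone; eauto. }
      pose proof (strip_doors_even j n Heven) as Hpar.
      rewrite Hodd, !left_red in Hpar by lia.
      pose proof (right_not_red j ltac:(lia)); pose proof (right_not_red (S j) Hj).
      destruct (col n j), (col n (S j)), (row_doors (S j) n); simpl in *; congruence. }
  destruct (Hrows n (le_n n)) as [(i & j & Hi & Hj & Ht) | Hodd].
  - exists i, j; auto.
  - now rewrite row_doors_top in Hodd.
Qed.

End Sperner.

Definition cell_has (col : nat -> nat -> colour) (i j : nat) (C : colour) : Prop :=
  col i j = C \/ col (S i) j = C \/ col i (S j) = C \/ col (S i) (S j) = C.

Lemma sperner_grid (col : nat -> nat -> colour) (n : nat) :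
  (forall j, j <= n -> col 0 j = red) ->
  (forall j, j <= n -> col n j <> red) ->
  (forall i, i <= n -> col i 0 <> blue) ->
  (forall i, i <= n -> col i n <> green) ->
  exists i j, i < n /\ j < n /\ forall C, cell_has col i j C.
Proof.
  intros Hl Hr Hb Ht.
  destruct (exists_strip_trichromatic col n Hl Hr Hb Ht) as (i & j & Hi & Hj & Hs).
  exists i, j; split; [auto | split; [auto |]]; intros C; unfold cell_has.
  unfold strip_trichromatic in Hs; apply orb_true_elim in Hs as [Hs | Hs];
    destruct (trichromatic_has _ _ _ Hs C) as [E | [E | E]]; tauto.
Qed.

Local Open Scope R_scope.

Definition in_rect (a b c d x y : R) : Prop := a <= x <= b /\ c <= y <= d.

Definition continuous_on_rect (f : R -> R -> R) (a b c d : R) : Prop :=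
  forall x y, in_rect a b c d x y -> forall eps, 0 < eps ->
  exists delta, 0 < delta /\ forall u v, in_rect a b c d u v ->
    Rabs (u - x) < delta -> Rabs (v - y) < delta -> Rabs (f u v - f x y) < eps.

Definition adherent_in_rect (P : R -> R -> Prop) (a b c d x y : R) : Prop :=
  forall delta, 0 < delta -> exists u v, in_rect a b c d u v /\
    Rabs (u - x) < delta /\ Rabs (v - y) < delta /\ P u v.

Lemma zero_of_sign_change (F : R -> R -> R) a b c d x y :
  continuous_on_rect F a b c d -> in_rect a b c d x y ->
  adherent_in_rect (fun u v => F u v < 0) a b c d x y ->
  adherent_in_rect (fun u v => 0 <= F u v) a b c d x y ->
  F x y = 0.
Proof.
  intros Hcont Hxy Hneg Hpos.
  destruct (Rtotal_order (F x y) 0) as [Hlt | [Heq | Hgt]]; auto; exfalso.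
  - destruct (Hcont x y Hxy (- F x y) ltac:(lra)) as (delta & Hdelta & Hnear).
    destruct (Hpos delta Hdelta) as (u & v & Huv & Hu & Hv & HF).
    specialize (Hnear u v Huv Hu Hv); apply Rabs_def2 in Hnear; lra.
  - destruct (Hcont x y Hxy (F x y) Hgt) as (delta & Hdelta & Hnear).
    destruct (Hneg delta Hdelta) as (u & v & Huv & Hu & Hv & HF).
    specialize (Hnear u v Huv Hu Hv); apply Rabs_def2 in Hnear; lra.
Qed.

Lemma ValAdh_near (u : nat -> R) l : ValAdh u l ->
  forall eps N, 0 < eps -> exists p, (N <= p)%nat /\ Rabs (u p - l) < eps.
Proof.
  intros Hl eps N Heps.
  apply (Hl (disc l (mkposreal eps Heps)) N).
  now exists (mkposreal eps Heps).
Qed.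

Lemma ValAdh_in_interval (u : nat -> R) l a b :
  (forall n, a <= u n <= b) -> ValAdh u l -> a <= l <= b.
Proof.
  intros Hu Hl; split; apply Rnot_lt_le; intros Hout.
  - destruct (ValAdh_near u l Hl (a - l) 0 ltac:(lra)) as (p & _ & Hp).
    specialize (Hu p); apply Rabs_def2 in Hp; lra.
  - destruct (ValAdh_near u l Hl (l - b) 0 ltac:(lra)) as (p & _ & Hp).
    specialize (Hu p); apply Rabs_def2 in Hp; lra.
Qed.

Lemma inv_INR_S_le (N p : nat) : (1 <= N)%nat -> (N <= p)%nat -> / INR (S p) <= / INR N.
Proof.
  intros HN Hp; apply Rinv_le_contravar; [apply lt_0_INR; lia | apply le_INR; lia].
Qed.

(* A cluster value l1 of u, then a cluster value of v along a subsequence on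
   which u tends to l1. *)
Lemma cluster_point_rect (u v : nat -> R) a b c d :
  (forall n, in_rect a b c d (u n) (v n)) ->
  exists l1 l2, in_rect a b c d l1 l2 /\ forall eps N, 0 < eps ->
    exists p, (N <= p)%nat /\ Rabs (u p - l1) < eps /\ Rabs (v p - l2) < eps.
Proof.
  intros Huv.
  destruct (Bolzano_Weierstrass u (fun t => a <= t <= b) (compact_P3 a b)) as [l1 Hl1].
  { intros n; apply Huv. }
  destruct (functional_choice (fun k p => (k <= p)%nat /\ Rabs (u p - l1) < / INR (S k)))
    as [phi Hphi].
  { intros k; apply ValAdh_near; auto; apply Rinv_0_lt_compat, lt_0_INR; lia. }
  destruct (Bolzano_Weierstrass (fun k => v (phi k)) (fun t => c <= t <= d) (compact_P3 c d))
    as [l2 Hl2].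
  { intros k; apply Huv. }
  exists l1, l2; split.
  { split; [apply (ValAdh_in_interval u) | apply (ValAdh_in_interval (fun k => v (phi k)))];
      auto; intros n; apply Huv. }
  intros eps N Heps.
  destruct (archimed_cor1 eps Heps) as (K & HK & HK1).
  destruct (ValAdh_near _ l2 Hl2 eps (max N K) Heps) as (k & Hk & Hvk).
  destruct (Hphi k) as [Hphik Hupk].
  exists (phi k); repeat split; auto; [lia |].
  pose proof (inv_INR_S_le K k ltac:(lia) ltac:(lia)); lra.
Qed.

Definition grid (a b : R) (m i : nat) : R := a + (b - a) * (INR i / INR m).

Section Grid.

Variables (a b : R) (m : nat).
Hypotheses (Hab : a <= b) (Hm : (1 <= m)%nat).

Let Hm_pos : 0 < INR m.
Proof. apply lt_0_INR; lia. Qed.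

Lemma grid_0 : grid a b m 0 = a.
Proof. unfold grid; simpl; field; lra. Qed.

Lemma grid_last : grid a b m m = b.
Proof. unfold grid; field; lra. Qed.

Lemma grid_in i : (i <= m)%nat -> a <= grid a b m i <= b.
Proof.
  intros Hi; unfold grid.
  assert (0 <= INR i / INR m <= 1).
  { split; [apply Rdiv_le_0_compat; [apply pos_INR | lra] |].
    apply (Rdiv_le_1 _ _ Hm_pos), le_INR; lia. }
  nra.
Qed.

Lemma grid_step i : grid a b m (S i) - grid a b m i = (b - a) / INR m.
Proof. unfold grid; rewrite S_INR; field; lra. Qed.

Lemma grid_near i i' : (i < m)%nat -> i' = i \/ i' = S i ->
  a <= grid a b m i' <= b /\ Rabs (grid a b m i' - grid a b m i) <= (b - a) / INR m.
Proof.
  intros Hi Hi'; split; [apply grid_in; lia |].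
  assert (0 <= (b - a) / INR m) by (apply Rdiv_le_0_compat; lra).
  destruct Hi' as [-> | ->].
  - rewrite Rminus_diag, Rabs_R0; lra.
  - rewrite grid_step, Rabs_right; lra.
Qed.

End Grid.

Lemma exists_fine_grid (L delta : R) : 0 <= L -> 0 < delta ->
  exists m, (1 <= m)%nat /\ L / INR m <= delta.
Proof.
  intros HL Hdelta.
  destruct (archimed_cor1 (delta / (L + 1))) as (m & Hm & Hm1).
  { apply Rdiv_lt_0_compat; lra. }
  exists m; split; [lia |].
  assert (0 < INR m) by (apply lt_0_INR; lia).
  apply Rmult_lt_compat_r with (r := L + 1) in Hm; [| lra].
  replace (delta / (L + 1) * (L + 1)) with delta in Hm by (field; lra).
  unfold Rdiv; rewrite Rmult_comm.
  apply Rle_trans with (/ INR m * (L + 1)); [| lra].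
  apply Rmult_le_compat_l; [apply Rlt_le, Rinv_0_lt_compat |]; lra.
Qed.

Lemma continuous_on_rect_lipschitz (f : R -> R -> R) L a b c d :
  (forall x y u v, in_rect a b c d x y -> in_rect a b c d u v ->
     Rabs (f u v - f x y) <= L * (Rabs (u - x) + Rabs (v - y))) ->
  continuous_on_rect f a b c d.
Proof.
  intros Hlip x y Hxy eps Heps.
  set (M := Rabs L + 1); assert (HM : 0 < M) by (unfold M; pose proof (Rabs_pos L); lra).
  exists (eps / (2 * M)); split; [apply Rdiv_lt_0_compat; lra |].
  intros u v Huv Hu Hv.
  assert (HMdelta : 2 * M * (eps / (2 * M)) = eps) by (field; lra).
  assert (HLM : L * (Rabs (u - x) + Rabs (v - y)) <= M * (Rabs (u - x) + Rabs (v - y))).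
  { apply Rmult_le_compat_r; [pose proof (Rabs_pos (u - x)); pose proof (Rabs_pos (v - y)); lra |].
    unfold M; pose proof (Rle_abs L); lra. }
  pose proof (Hlip x y u v Hxy Huv); nra.
Qed.

Section PoincareMiranda.

Variables (f g : R -> R -> R) (a b c d : R).
Hypotheses (Hab : a <= b) (Hcd : c <= d).
Hypotheses (f_cont : continuous_on_rect f a b c d) (g_cont : continuous_on_rect g a b c d).
Hypothesis f_left : forall y, c <= y <= d -> f a y < 0.
Hypothesis f_right : forall y, c <= y <= d -> 0 <= f b y.
Hypothesis g_bottom : forall x, a <= x <= b -> g x c < 0.
Hypothesis g_top : forall x, a <= x <= b -> 0 <= g x d.

Definition colour_of (x y : R) : colour :=
  if Rlt_dec (f x y) 0 then red else if Rlt_dec (g x y) 0 then green else blue.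

Definition has_colour (C : colour) (x y : R) : Prop :=
  match C with
  | red => f x y < 0
  | green => g x y < 0
  | blue => 0 <= f x y /\ 0 <= g x y
  end.

Lemma has_colour_of x y : has_colour (colour_of x y) x y.
Proof.
  unfold colour_of; destruct (Rlt_dec (f x y) 0); simpl; auto.
  destruct (Rlt_dec (g x y) 0); simpl; auto; lra.
Qed.

Lemma colourful_cell delta : 0 < delta ->
  exists x y, in_rect a b c d x y /\ forall C, exists u v, in_rect a b c d u v /\
    Rabs (u - x) <= delta /\ Rabs (v - y) <= delta /\ has_colour C u v.
Proof.
  intros Hdelta.
  destruct (exists_fine_grid ((b - a) + (d - c)) delta ltac:(lra) Hdelta) as (m & Hm & Hmesh).
  assert (Hm_pos : 0 < INR m) by (apply lt_0_INR; lia).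
  set (X := grid a b m); set (Y := grid c d m).
  assert (HX : forall i, (i <= m)%nat -> a <= X i <= b) by (intros; apply grid_in; auto).
  assert (HY : forall j, (j <= m)%nat -> c <= Y j <= d) by (intros; apply grid_in; auto).
  set (col i j := colour_of (X i) (Y j)).
  destruct (sperner_grid col m) as (i & j & Hi & Hj & Hcell).
  - intros j Hj; unfold col, colour_of, X; rewrite grid_0 by auto.
    destruct (Rlt_dec _ 0) as [| Hf]; [auto | exfalso; apply Hf, f_left, HY, Hj].
  - intros j Hj; unfold col, colour_of, X; rewrite grid_last by auto.
    pose proof (f_right (Y j) (HY j Hj)).
    destruct (Rlt_dec _ 0); [lra |]; destruct (Rlt_dec _ 0); discriminate.
  - intros i Hi; unfold col, colour_of, Y; rewrite grid_0 by auto.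
    pose proof (g_bottom (X i) (HX i Hi)).
    destruct (Rlt_dec _ 0); [discriminate |]; destruct (Rlt_dec _ 0); [discriminate | lra].
  - intros i Hi; unfold col, colour_of, Y; rewrite grid_last by auto.
    pose proof (g_top (X i) (HX i Hi)).
    destruct (Rlt_dec _ 0); [discriminate |]; destruct (Rlt_dec _ 0); [lra | discriminate].
  - assert (Hcorner : forall i' j', i' = i \/ i' = S i -> j' = j \/ j' = S j ->
      in_rect a b c d (X i') (Y j') /\ Rabs (X i' - X i) <= delta /\ Rabs (Y j' - Y j) <= delta).
    { intros i' j' Hi' Hj'.
      destruct (grid_near a b m Hab Hm i i' Hi Hi') as [Hx Hdx].
      destruct (grid_near c d m Hcd Hm j j' Hj Hj') as [Hy Hdy].
      assert ((b - a) / INR m <= delta /\ (d - c) / INR m <= delta).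
      { unfold Rdiv in *; split; apply Rle_trans with (2 := Hmesh);
          apply Rmult_le_compat_r; try (apply Rlt_le, Rinv_0_lt_compat); lra. }
      unfold X, Y; repeat split; lra. }
    exists (X i), (Y j); split; [split; [apply HX | apply HY]; lia |].
    intros C; destruct (Hcell C) as [E | [E | [E | E]]];
    [ destruct (Hcorner i j) as (? & ? & ?); auto; exists (X i), (Y j)
    | destruct (Hcorner (S i) j) as (? & ? & ?); auto; exists (X (S i)), (Y j)
    | destruct (Hcorner i (S j)) as (? & ? & ?); auto; exists (X i), (Y (S j))
    | destruct (Hcorner (S i) (S j)) as (? & ? & ?); auto; exists (X (S i)), (Y (S j)) ];
    (split; [auto | split; [auto | split; [auto |]]]); rewrite <- E; apply has_colour_of.
Qed.

Lemma adherent_colours : exists x y, in_rect a b c d x y /\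
  forall C, adherent_in_rect (has_colour C) a b c d x y.
Proof.
  destruct (functional_choice (fun n (p : R * R) => in_rect a b c d (fst p) (snd p) /\
      forall C, exists u v, in_rect a b c d u v /\ Rabs (u - fst p) <= / INR (S n) /\
        Rabs (v - snd p) <= / INR (S n) /\ has_colour C u v)) as [centre Hcentre].
  { intros n; destruct (colourful_cell (/ INR (S n))) as (x & y & H).
    - apply Rinv_0_lt_compat, lt_0_INR; lia.
    - now exists (x, y). }
  destruct (cluster_point_rect (fun n => fst (centre n)) (fun n => snd (centre n)) a b c d)
    as (l1 & l2 & Hl & Hcluster).
  { intros n; apply Hcentre. }
  exists l1, l2; split; auto; intros C delta Hdelta.
  destruct (archimed_cor1 (delta / 2)) as (N & HN & HN1); [lra |].
  destruct (Hcluster (delta / 2) N ltac:(lra)) as (p & Hp & Hx & Hy).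
  destruct (Hcentre p) as [_ Hcol]; destruct (Hcol C) as (u & v & Huv & Hu & Hv & HC).
  pose proof (inv_INR_S_le N p ltac:(lia) Hp).
  exists u, v; split; [auto | split; [| split; [| auto]]].
  - pose proof (Rabs_triang (u - fst (centre p)) (fst (centre p) - l1)).
    replace (u - fst (centre p) + (fst (centre p) - l1)) with (u - l1) in * by ring; lra.
  - pose proof (Rabs_triang (v - snd (centre p)) (snd (centre p) - l2)).
    replace (v - snd (centre p) + (snd (centre p) - l2)) with (v - l2) in * by ring; lra.
Qed.

Theorem poincare_miranda :
  exists x y, in_rect a b c d x y /\ f x y = 0 /\ g x y = 0.
Proof.
  destruct adherent_colours as (x & y & Hxy & Hcol).
  assert (Hweaken : forall C (P : R -> R -> Prop), (forall u v, has_colour C u v -> P u v) ->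
    adherent_in_rect P a b c d x y).
  { intros C P HP delta Hdelta.
    destruct (Hcol C delta Hdelta) as (u & v & Huv & Hu & Hv & HC); eauto 7. }
  exists x, y; split; [auto | split]; apply zero_of_sign_change with a b c d; auto.
  - apply (Hweaken red); auto.
  - apply (Hweaken blue); intros u v []; auto.
  - apply (Hweaken green); auto.
  - apply (Hweaken blue); intros u v []; auto.
Qed.

End PoincareMiranda.

Lemma Rabs_mult_le a b A B : Rabs a <= A -> Rabs b <= B -> Rabs (a * b) <= A * B.
Proof.
  intros Ha Hb; rewrite Rabs_mult.
  apply Rmult_le_compat; auto using Rabs_pos.
Qed.

Lemma pow_lipschitz a b M n : Rabs a <= M -> Rabs b <= M ->
  Rabs (a ^ n - b ^ n) <= INR n * M ^ pred n * Rabs (a - b).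
Proof.
  intros Ha Hb; induction n as [|n IH].
  - simpl; rewrite Rminus_diag, Rabs_R0; lra.
  - replace (a ^ S n - b ^ S n) with (a * (a ^ n - b ^ n) + b ^ n * (a - b)) by (simpl; ring).
    assert (Hbn : Rabs (b ^ n) <= M ^ n).
    { rewrite <- RPow_abs; apply pow_incr; auto using Rabs_pos. }
    assert (HM : M * (INR n * M ^ pred n) = INR n * M ^ n) by (destruct n; simpl; ring).
    pose proof (Rabs_mult_le _ _ _ _ Ha IH) as H1.
    pose proof (Rabs_mult_le _ _ _ _ Hbn (Rle_refl (Rabs (a - b)))) as H2.
    eapply Rle_trans; [apply Rabs_triang |].
    rewrite S_INR; simpl pred.
    replace (M * (INR n * M ^ pred n * Rabs (a - b))) with (INR n * M ^ n * Rabs (a - b))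
      in H1 by (rewrite <- HM; ring).
    lra.
Qed.

Lemma pow_taylor_bound u n : Rabs u <= 1 ->
  Rabs ((1 + u) ^ n - 1 - INR n * u) <= INR n ^ 2 * 2 ^ n * u ^ 2.
Proof.
  intros Hu; induction n as [|n IH].
  - simpl; replace (1 - 1 - 0 * u) with 0 by ring; rewrite Rabs_R0; nra.
  - replace ((1 + u) ^ S n - 1 - INR (S n) * u)
      with ((1 + u) * ((1 + u) ^ n - 1 - INR n * u) + INR n * u ^ 2)
      by (rewrite S_INR; simpl; ring).
    assert (H1u : Rabs (1 + u) <= 2).
    { eapply Rle_trans; [apply Rabs_triang |]; rewrite Rabs_R1; lra. }
    pose proof (Rabs_mult_le _ _ _ _ H1u IH).
    assert (Hn : 0 <= INR n) by apply pos_INR.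
    assert (H2n : 1 <= 2 ^ n) by (apply pow_R1_Rle; lra).
    assert (Hu2 : 0 <= u ^ 2) by (simpl; nra).
    eapply Rle_trans; [apply Rabs_triang |].
    rewrite (Rabs_right (INR n * u ^ 2)) by (apply Rle_ge, Rmult_le_pos; auto).
    rewrite S_INR; simpl pow at 3 4.
    assert (INR n * u ^ 2 <= (2 * INR n + 1) * 2 * 2 ^ n * u ^ 2).
    { apply Rmult_le_compat_r; auto; nra. }
    nra.
Qed.

Lemma pow_sub_pow_ge v n : 0 <= v <= 1 -> 2 * INR n * v <= (1 + v) ^ n - (1 - v) ^ n.
Proof.
  intros Hv.
  assert (H : 2 * INR n * v <= (1 + v) ^ n - (1 - v) ^ n /\ 2 <= (1 + v) ^ n + (1 - v) ^ n).
  { induction n as [|n [IH1 IH2]]; [simpl; lra |].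
    rewrite S_INR; simpl.
    assert (0 <= (1 - v) ^ n) by (apply pow_le; lra).
    assert (0 <= INR n) by apply pos_INR.
    split; nra. }
  apply H.
Qed.

Lemma ex_RInt_derivable (F : R -> R) a b : (forall z, ex_derive F z) -> ex_RInt F a b.
Proof.
  intros HF; apply (@ex_RInt_continuous R_CompleteNormedModule); intros z _.
  apply (@ex_derive_continuous R_AbsRing R_NormedModule), HF.
Qed.

Lemma RInt_comp_opp_sym (F : R -> R) : ex_RInt F (-1) 1 ->
  RInt (fun z => F (- z)) (-1) 1 = RInt F (-1) 1.
Proof.
  intros HF; apply is_RInt_unique.
  rewrite <- (opp_RInt_swap F 1 (-1)) by (apply ex_RInt_swap, HF).
  apply (is_RInt_ext (fun z => opp (opp (F (- z))))); [intros; apply opp_opp |].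
  apply (@is_RInt_opp R_NormedModule), (@is_RInt_comp_opp R_NormedModule).
  replace (- -1) with 1 by ring; replace (- (1)) with (-1) by ring.
  apply (@RInt_correct R_CompleteNormedModule), ex_RInt_swap, HF.
Qed.

Lemma ex_RInt_h_integrand d1 d2 x1 x2 xa sa a b :
  ex_RInt (h_integrand d1 d2 x1 x2 xa sa) a b.
Proof. apply ex_RInt_derivable; intros; unfold h_integrand; auto_derive; auto. Qed.

Lemma h2_eq_opp_h1 d1 d2 s x1 x2 : h2 d1 d2 s x1 x2 = - h1 d2 d1 (- s) (- x2) (- x1).
Proof.
  unfold h1, h2.
  rewrite <- (RInt_comp_opp_sym (fun z => h_integrand d2 d1 (- x2) (- x1) (- x2) (- s) z))
    by apply ex_RInt_h_integrand.
  rewrite <- (@RInt_opp R_CompleteNormedModule) by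
    (apply ex_RInt_derivable; intros; unfold h_integrand; auto_derive; auto).
  apply RInt_ext; intros z _; unfold h_integrand, opp; simpl.
  replace (- x2 * - z) with (x2 * z) by ring; replace (- x1 * - z) with (x1 * z) by ring.
  ring.
Qed.

Lemma RInt_quadratic p q : RInt (fun z => p * z ^ 2 + q) (-1) 1 = 2 / 3 * p + 2 * q.
Proof.
  apply is_RInt_unique.
  replace (2 / 3 * p + 2 * q) with ((p / 3 * 1 ^ 3 + q * 1) - (p / 3 * (-1) ^ 3 + q * -1))
    by (simpl; field).
  apply (is_RInt_derive (fun z => p / 3 * z ^ 3 + q * z)).
  - intros z _; auto_derive; auto; simpl; field.
  - intros z _; apply (@ex_derive_continuous R_AbsRing R_NormedModule); auto_derive; auto.
Qed.

Lemma RInt_pow_affine_odd_le x n : -1 <= x <= 0 ->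
  RInt (fun z => (1 + x * z) ^ n * z) (-1) 1 <= 2 / 3 * INR n * x.
Proof.
  intros Hx.
  set (F z := (1 + x * z) ^ n * z).
  assert (HF : forall a b, ex_RInt F a b)
    by (intros; apply ex_RInt_derivable; intros; unfold F; auto_derive; auto).
  assert (Hsym : RInt F (-1) 1 = / 2 * RInt (fun z => F z + F (- z)) (-1) 1).
  { rewrite (@RInt_plus R_CompleteNormedModule F (fun z => F (- z))); auto.
    - rewrite RInt_comp_opp_sym by auto; unfold plus; simpl.
      assert (Hhalf : forall r : R, r = / 2 * (r + r)) by (intros; field); apply Hhalf.
    - apply ex_RInt_derivable; intros; unfold F; auto_derive; auto. }
  (* [F z + F (- z) = z ((1 + v)^n - (1 - v)^n)] with [v = x z] of the sign opposite to [z] *)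
  assert (Hpt : forall z, -1 < z < 1 -> F z + F (- z) <= 2 * INR n * x * z ^ 2 + 0).
  { intros z Hz; unfold F.
    destruct (Rle_lt_dec 0 z).
    - pose proof (pow_sub_pow_ge (- x * z) n ltac:(nra)).
      replace (1 + - x * z) with (1 + x * - z) in H by ring.
      replace (1 - - x * z) with (1 + x * z) in H by ring.
      simpl; nra.
    - pose proof (pow_sub_pow_ge (x * z) n ltac:(nra)).
      replace (1 - x * z) with (1 + x * - z) in H by ring.
      simpl; nra. }
  apply RInt_le in Hpt; [| lra | | apply ex_RInt_derivable; intros; auto_derive; auto].
  - rewrite RInt_quadratic in Hpt; lra.
  - apply ex_RInt_derivable; intros; unfold F; auto_derive; auto.
Qed.

Definition h_weight (xa sa z : R) : R :=
  xa * (xa * sa - 1) * (1 - z ^ 2) + z * (1 - xa ^ 2).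

Section Factors.

Variable z : R.
Hypothesis Hz : -1 <= z <= 1.

Lemma affine_factor_bound x : -1 <= x <= 1 -> Rabs (1 + x * z) <= 2.
Proof. intros Hx; apply Rabs_le; split; nra. Qed.

Lemma pow_factor_bound x n : -1 <= x <= 1 -> Rabs ((1 + x * z) ^ n) <= 2 ^ n.
Proof.
  intros Hx; rewrite <- RPow_abs; apply pow_incr.
  split; [apply Rabs_pos | now apply affine_factor_bound].
Qed.

Lemma pow_factor_lipschitz x y n : -1 <= x <= 1 -> -1 <= y <= 1 ->
  Rabs ((1 + x * z) ^ n - (1 + y * z) ^ n) <= INR n * 2 ^ n * Rabs (x - y).
Proof.
  intros Hx Hy.
  eapply Rle_trans; [apply pow_lipschitz; apply affine_factor_bound; eauto |].
  replace (1 + x * z - (1 + y * z)) with ((x - y) * z) by ring.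
  assert (2 ^ pred n <= 2 ^ n) by (apply Rle_pow; lia || lra).
  assert (Rabs ((x - y) * z) <= Rabs (x - y)).
  { rewrite Rabs_mult; pose proof (Rabs_pos (x - y)).
    assert (Rabs z <= 1) by (apply Rabs_le; lra); nra. }
  pose proof (pos_INR n); pose proof (Rabs_pos ((x - y) * z)).
  apply Rmult_le_compat; auto; [apply Rmult_le_pos; auto; apply pow_le; lra |].
  apply Rmult_le_compat_l; auto.
Qed.

Lemma h_weight_bound s x : -1 <= x <= 1 -> Rabs (h_weight x s z) <= Rabs s + 3.
Proof.
  intros Hx; unfold h_weight; apply Rabs_le.
  assert (Hs := Rabs_le_between s (Rabs s)); destruct Hs as [Hs _].
  specialize (Hs (Rle_refl _)).
  assert (0 <= x ^ 2 <= 1) by (simpl; split; nra).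
  assert (0 <= 1 - z ^ 2 <= 1) by (simpl; split; nra).
  assert (0 <= x ^ 2 * (1 - z ^ 2) <= 1) by (split; nra).
  replace (x * (x * s - 1) * (1 - z ^ 2) + z * (1 - x ^ 2))
    with (s * (x ^ 2 * (1 - z ^ 2)) - x * (1 - z ^ 2) + z * (1 - x ^ 2)) by ring.
  simpl in *; split; nra.
Qed.

Lemma h_weight_lipschitz s x y : -1 <= x <= 1 -> -1 <= y <= 1 ->
  Rabs (h_weight x s z - h_weight y s z) <= (2 * Rabs s + 3) * Rabs (x - y).
Proof.
  intros Hx Hy; unfold h_weight.
  replace (x * (x * s - 1) * (1 - z ^ 2) + z * (1 - x ^ 2)
           - (y * (y * s - 1) * (1 - z ^ 2) + z * (1 - y ^ 2)))
    with ((s * ((x + y) * (1 - z ^ 2)) - (1 - z ^ 2) - z * (x + y)) * (x - y)) by ring.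
  apply Rabs_mult_le; [| apply Rle_refl].
  assert (Hs := Rabs_le_between s (Rabs s)); destruct Hs as [Hs _].
  specialize (Hs (Rle_refl _)).
  assert (0 <= 1 - z ^ 2 <= 1) by (simpl; split; nra).
  assert (-2 <= (x + y) * (1 - z ^ 2) <= 2) by (split; nra).
  apply Rabs_le; simpl in *; split; nra.
Qed.

End Factors.

Lemma h_integrand_eq d1 d2 x1 x2 xa sa z :
  h_integrand d1 d2 x1 x2 xa sa z = (1 + x1 * z) ^ d1 * (1 + x2 * z) ^ d2 * h_weight xa sa z.
Proof. reflexivity. Qed.

Lemma h1_integrand_lipschitz d1 d2 s x1 x2 y1 y2 z :
  -1 <= x1 <= 1 -> -1 <= x2 <= 1 -> -1 <= y1 <= 1 -> -1 <= y2 <= 1 -> -1 <= z <= 1 ->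
  Rabs (h_integrand d1 d2 x1 x2 x1 s z - h_integrand d1 d2 y1 y2 y1 s z)
  <= 2 ^ d1 * 2 ^ d2 * (INR d1 + INR d2 + 2) * (Rabs s + 3) * (Rabs (x1 - y1) + Rabs (x2 - y2)).
Proof.
  intros Hx1 Hx2 Hy1 Hy2 Hz; rewrite !h_integrand_eq.
  pose proof (pow_factor_bound z Hz x2 d2 Hx2) as Hv.
  pose proof (pow_factor_bound z Hz y1 d1 Hy1) as Hu'.
  pose proof (pow_factor_bound z Hz y2 d2 Hy2) as Hv'.
  pose proof (h_weight_bound z Hz s x1 Hx1) as Hw.
  pose proof (pow_factor_lipschitz z Hz x1 y1 d1 Hx1 Hy1) as Hu_u'.
  pose proof (pow_factor_lipschitz z Hz x2 y2 d2 Hx2 Hy2) as Hv_v'.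
  pose proof (h_weight_lipschitz z Hz s x1 y1 Hx1 Hy1) as Hw_w'.
  pose proof (Rabs_mult_le _ _ _ _ Hu_u' (Rabs_mult_le _ _ _ _ Hv Hw)) as T1.
  pose proof (Rabs_mult_le _ _ _ _ Hu' (Rabs_mult_le _ _ _ _ Hv_v' Hw)) as T2.
  pose proof (Rabs_mult_le _ _ _ _ Hu' (Rabs_mult_le _ _ _ _ Hv' Hw_w')) as T3.
  set (u := (1 + x1 * z) ^ d1) in *; set (u' := (1 + y1 * z) ^ d1) in *.
  set (v := (1 + x2 * z) ^ d2) in *; set (v' := (1 + y2 * z) ^ d2) in *.
  set (w := h_weight x1 s z) in *; set (w' := h_weight y1 s z) in *.
  replace (u * v * w - u' * v' * w')
    with ((u - u') * (v * w) + u' * ((v - v') * w) + u' * (v' * (w - w'))) by ring.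
  eapply Rle_trans; [apply Rabs_triang |].
  eapply Rle_trans; [apply Rplus_le_compat_r, Rabs_triang |].
  assert (0 < 2 ^ d1) by (apply pow_lt; lra); assert (0 < 2 ^ d2) by (apply pow_lt; lra).
  pose proof (pos_INR d1); pose proof (pos_INR d2); pose proof (Rabs_pos s).
  pose proof (Rabs_pos (x1 - y1)); pose proof (Rabs_pos (x2 - y2)).
  set (e1 := Rabs (x1 - y1)) in *; set (e2 := Rabs (x2 - y2)) in *; set (S := Rabs s) in *.
  assert (0 <= 2 ^ d1 * 2 ^ d2 * ((INR d1 + 2) * (S + 3) * e2 + INR d2 * (S + 3) * e1 + 3 * e1)).
  { apply Rmult_le_pos; [nra |].
    repeat apply Rplus_le_le_0_compat; repeat apply Rmult_le_pos; lra. }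
  lra.
Qed.

Lemma h1_lipschitz d1 d2 s x1 x2 y1 y2 :
  -1 <= x1 <= 1 -> -1 <= x2 <= 1 -> -1 <= y1 <= 1 -> -1 <= y2 <= 1 ->
  Rabs (h1 d1 d2 s x1 x2 - h1 d1 d2 s y1 y2)
  <= 2 * (2 ^ d1 * 2 ^ d2 * (INR d1 + INR d2 + 2) * (Rabs s + 3))
       * (Rabs (x1 - y1) + Rabs (x2 - y2)).
Proof.
  intros Hx1 Hx2 Hy1 Hy2; unfold h1.
  rewrite <- (@RInt_minus R_CompleteNormedModule) by apply ex_RInt_h_integrand.
  replace 2 with (1 - -1) at 1 by ring; rewrite Rmult_assoc.
  apply abs_RInt_le_const; [lra | |].
  - apply (@ex_RInt_minus R_CompleteNormedModule); apply ex_RInt_h_integrand.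
  - intros z Hz; apply h1_integrand_lipschitz; auto.
Qed.

Lemma h1_continuous_on_rect d1 d2 s a b c d : -1 <= a -> b <= 1 -> -1 <= c -> d <= 1 ->
  continuous_on_rect (h1 d1 d2 s) a b c d.
Proof.
  intros Ha Hb Hc Hd.
  apply (continuous_on_rect_lipschitz _
           (2 * (2 ^ d1 * 2 ^ d2 * (INR d1 + INR d2 + 2) * (Rabs s + 3)))).
  intros x y u v [Hx Hy] [Hu Hv]; apply h1_lipschitz; lra.
Qed.

Lemma h2_continuous_on_rect d1 d2 s a b c d : -1 <= a -> b <= 1 -> -1 <= c -> d <= 1 ->
  continuous_on_rect (h2 d1 d2 s) a b c d.
Proof.
  intros Ha Hb Hc Hd.
  apply (continuous_on_rect_lipschitz _
           (2 * (2 ^ d2 * 2 ^ d1 * (INR d2 + INR d1 + 2) * (Rabs (- s) + 3)))).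
  intros x y u v [Hx Hy] [Hu Hv]; rewrite !h2_eq_opp_h1.
  replace (- h1 d2 d1 (- s) (- v) (- u) - - h1 d2 d1 (- s) (- y) (- x))
    with (- (h1 d2 d1 (- s) (- v) (- u) - h1 d2 d1 (- s) (- y) (- x))) by ring.
  rewrite Rabs_Ropp, (Rplus_comm (Rabs (u - x))).
  replace (Rabs (u - x)) with (Rabs (- u - - x)) by (rewrite <- Rabs_Ropp; f_equal; ring).
  replace (Rabs (v - y)) with (Rabs (- v - - y)) by (rewrite <- Rabs_Ropp; f_equal; ring).
  apply h1_lipschitz; lra.
Qed.

Lemma h1_pos_at_1 d1 d2 s x2 : 1 < s -> -1 <= x2 <= 1 -> 0 < h1 d1 d2 s 1 x2.
Proof.
  intros Hs Hx2; unfold h1.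
  apply RInt_gt_0; [lra | | intros; apply (@ex_derive_continuous R_AbsRing R_NormedModule);
                           unfold h_integrand; auto_derive; auto].
  intros z Hz; rewrite h_integrand_eq; unfold h_weight.
  replace (1 * (1 * s - 1) * (1 - z ^ 2) + z * (1 - 1 ^ 2)) with ((s - 1) * (1 - z ^ 2)) by ring.
  assert (0 < (1 + 1 * z) ^ d1) by (apply pow_lt; lra).
  assert (0 < (1 + x2 * z) ^ d2) by (apply pow_lt; destruct (Rle_lt_dec 0 z); nra).
  assert (0 < (s - 1) * (1 - z ^ 2)) by (apply Rmult_lt_0_compat; simpl; nra).
  apply Rmult_lt_0_compat; [apply Rmult_lt_0_compat |]; auto.
Qed.

Lemma h2_neg_at_minus_1 d1 d2 s x1 : s < -1 -> -1 <= x1 <= 1 -> h2 d1 d2 s x1 (-1) < 0.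
Proof.
  intros Hs Hx1; rewrite h2_eq_opp_h1; replace (- -1) with 1 by ring.
  pose proof (h1_pos_at_1 d2 d1 (- s) (- x1) ltac:(lra) ltac:(lra)); lra.
Qed.

Lemma h_weight_expansion d1 s x1 z : -1 <= x1 <= 1 -> -1 <= z <= 1 ->
  Rabs ((1 + x1 * z) ^ d1 * h_weight x1 s z - z - x1 * ((INR d1 + 1) * z ^ 2 - 1))
  <= (INR d1 + 2 ^ d1 * (2 * INR d1 ^ 2 + Rabs s + 1)) * x1 ^ 2.
Proof.
  intros Hx1 Hz; unfold h_weight.
  set (P := (1 + x1 * z) ^ d1).
  set (r := P - 1 - INR d1 * (x1 * z)).
  replace (P * (x1 * (x1 * s - 1) * (1 - z ^ 2) + z * (1 - x1 ^ 2)) - z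
           - x1 * ((INR d1 + 1) * z ^ 2 - 1))
    with (INR d1 * x1 ^ 2 * (z * (z ^ 2 - 1)) + r * (z - x1 * (1 - z ^ 2))
          + P * (x1 ^ 2 * (s * (1 - z ^ 2) - z))) by (unfold r; ring).
  assert (Hx1sq : 0 <= x1 ^ 2 <= 1) by (simpl; split; nra).
  assert (Hz2 : 0 <= 1 - z ^ 2 <= 1) by (simpl; split; nra).
  assert (T1 : Rabs (INR d1 * x1 ^ 2 * (z * (z ^ 2 - 1))) <= INR d1 * x1 ^ 2 * 1).
  { apply Rabs_mult_le.
    - rewrite Rabs_right; [lra | apply Rle_ge, Rmult_le_pos; [apply pos_INR | lra]].
    - apply Rabs_le; simpl in *; split; nra. }
  assert (T2 : Rabs (r * (z - x1 * (1 - z ^ 2))) <= INR d1 ^ 2 * 2 ^ d1 * x1 ^ 2 * 2).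
  { apply Rabs_mult_le; [| apply Rabs_le; split; nra].
    eapply Rle_trans; [apply pow_taylor_bound, Rabs_le; split; nra |].
    apply Rmult_le_compat_l; [apply Rmult_le_pos; [apply pow_le, pos_INR | apply pow_le; lra] |].
    simpl in *; nra. }
  assert (T3 : Rabs (P * (x1 ^ 2 * (s * (1 - z ^ 2) - z))) <= 2 ^ d1 * (x1 ^ 2 * (Rabs s + 1))).
  { apply Rabs_mult_le; [apply pow_factor_bound; auto |].
    apply Rabs_mult_le; [rewrite Rabs_right; lra |].
    destruct (Rabs_le_between s (Rabs s)) as [Hs _]; specialize (Hs (Rle_refl _)).
    apply Rabs_le; split; nra. }
  eapply Rle_trans; [apply Rabs_triang |].
  eapply Rle_trans; [apply Rplus_le_compat_r, Rabs_triang |].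
  lra.
Qed.

Definition h1_remainder_const (d1 d2 : nat) (s : R) : R :=
  2 ^ d2 * (INR d1 + 2 ^ d1 * (2 * INR d1 ^ 2 + Rabs s + 1) + INR d2 * (INR d1 + 1)).

Lemma h1_integrand_le d1 d2 s x1 x2 z : 0 <= x1 <= 1 -> -1 <= x2 <= 0 -> -1 <= z <= 1 ->
  h_integrand d1 d2 x1 x2 x1 s z
  <= (1 + x2 * z) ^ d2 * z
     + (x1 * (INR d1 + 1) * z ^ 2 + (h1_remainder_const d1 d2 s * x1 * (x1 - x2) - x1)).
Proof.
  intros Hx1 Hx2 Hz; rewrite h_integrand_eq; unfold h1_remainder_const.
  set (B := (1 + x2 * z) ^ d2).
  set (q := (INR d1 + 1) * z ^ 2 - 1).
  set (C := INR d1 + 2 ^ d1 * (2 * INR d1 ^ 2 + Rabs s + 1)).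
  set (E := (1 + x1 * z) ^ d1 * h_weight x1 s z - z - x1 * q).
  assert (HE : Rabs E <= C * x1 ^ 2) by (apply h_weight_expansion; lra).
  assert (HB : Rabs B <= 2 ^ d2) by (apply pow_factor_bound; lra).
  assert (HB1 : Rabs (B - 1) <= INR d2 * 2 ^ d2 * - x2).
  { pose proof (pow_factor_lipschitz z Hz x2 0 d2 ltac:(lra) ltac:(lra)) as H.
    rewrite Rmult_0_l, Rplus_0_r, pow1, Rminus_0_r, (Rabs_left1 x2) in H by lra; exact H. }
  assert (Hq : Rabs (x1 * q) <= x1 * (INR d1 + 1)).
  { rewrite Rabs_mult, Rabs_right by lra; apply Rmult_le_compat_l; [lra |].
    assert (0 <= z ^ 2 <= 1) by (simpl; split; nra).
    pose proof (pos_INR d1); unfold q; apply Rabs_le; split; nra. }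
  pose proof (Rabs_mult_le _ _ _ _ HB1 Hq) as T1.
  pose proof (Rabs_mult_le _ _ _ _ HB HE) as T2.
  replace ((1 + x1 * z) ^ d1 * B * h_weight x1 s z)
    with (B * z + x1 * q + ((B - 1) * (x1 * q) + B * E)) by (unfold E; ring).
  assert (Hsum := Rle_abs ((B - 1) * (x1 * q) + B * E)).
  pose proof (Rabs_triang ((B - 1) * (x1 * q)) (B * E)).
  assert (0 <= 2 ^ d2) by (apply pow_le; lra).
  assert (0 <= C) by (unfold C; pose proof (pos_INR d1); pose proof (Rabs_pos s);
    assert (0 < 2 ^ d1) by (apply pow_lt; lra); nra).
  assert (INR d2 * 2 ^ d2 * - x2 * (x1 * (INR d1 + 1)) + 2 ^ d2 * (C * x1 ^ 2)
          <= 2 ^ d2 * (C + INR d2 * (INR d1 + 1)) * (x1 * (x1 - x2))).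
  { pose proof (pos_INR d1); pose proof (pos_INR d2).
    assert (0 <= 2 ^ d2 * C * (x1 * - x2)) by (repeat apply Rmult_le_pos; lra).
    assert (0 <= 2 ^ d2 * INR d2 * (INR d1 + 1) * (x1 * x1)) by (repeat apply Rmult_le_pos; lra).
    lra. }
  unfold q in *; lra.
Qed.

Lemma h1_le_linear d1 d2 s x1 x2 : 0 <= x1 <= 1 -> -1 <= x2 <= 0 ->
  h1 d1 d2 s x1 x2
  <= 2 / 3 * (INR d2 * x2 + (INR d1 - 2) * x1) + 2 * h1_remainder_const d1 d2 s * x1 * (x1 - x2).
Proof.
  intros Hx1 Hx2; unfold h1.
  assert (Hex : forall F : R -> R, (forall z, ex_derive F z) -> ex_RInt F (-1) 1)
    by (intros; apply ex_RInt_derivable; auto).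
  eapply Rle_trans.
  { apply RInt_le; [lra | apply ex_RInt_h_integrand | | intros z Hz; apply h1_integrand_le; lra].
    apply Hex; intros; auto_derive; auto. }
  rewrite (@RInt_plus R_CompleteNormedModule) by (apply Hex; intros; auto_derive; auto).
  unfold plus; simpl.
  rewrite RInt_quadratic.
  pose proof (RInt_pow_affine_odd_le x2 d2 Hx2).
  lra.
Qed.

Lemma h1_neg_near_x2_axis d1 d2 s e x2 : (1 <= d2)%nat -> 0 < e ->
  3 * h1_remainder_const d1 d2 s * e * (INR d1 + INR d2) <= 1 -> INR d2 * e <= 1 ->
  -1 <= x2 <= - (INR d1 * e) -> h1 d1 d2 s (INR d2 * e) x2 < 0.
Proof.
  intros Hd2 He HK Hn2e Hx2.
  assert (Hn1 : 0 <= INR d1) by apply pos_INR.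
  assert (Hn2 : 1 <= INR d2) by (apply (le_INR 1); lia).
  eapply Rle_lt_trans; [apply h1_le_linear; nra |].
  set (K := h1_remainder_const d1 d2 s) in *.
  (* with [t = - x2 - INR d1 * e >= 0] the bound reads
     [INR d2 * (- t * (2/3 - 2 K e) - 4/3 e + 2 K e^2 (INR d1 + INR d2))] *)
  assert (HKe : 2 * K * e <= 2 / 3).
  { destruct (Rle_lt_dec (K * e) 0); [lra |].
    assert (K * e <= K * e * (INR d1 + INR d2)) by nra; lra. }
  assert (0 <= (- x2 - INR d1 * e) * (2 / 3 - 2 * K * e)) by (apply Rmult_le_pos; lra).
  assert (2 * K * e * e * (INR d1 + INR d2) <= 2 / 3 * e) by nra.
  replace (2 / 3 * (INR d2 * x2 + (INR d1 - 2) * (INR d2 * e))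
           + 2 * K * (INR d2 * e) * (INR d2 * e - x2))
    with (INR d2 * (- (- x2 - INR d1 * e) * (2 / 3 - 2 * K * e) - 4 / 3 * e
                    + 2 * K * e * e * (INR d1 + INR d2))) by field.
  assert (- (- x2 - INR d1 * e) * (2 / 3 - 2 * K * e) - 4 / 3 * e
          + 2 * K * e * e * (INR d1 + INR d2) < 0) by lra.
  nra.
Qed.

Lemma h2_nonneg_near_x1_axis d1 d2 s e x1 : (1 <= d1)%nat -> 0 < e ->
  3 * h1_remainder_const d2 d1 (- s) * e * (INR d2 + INR d1) <= 1 -> INR d1 * e <= 1 ->
  INR d2 * e <= x1 <= 1 -> 0 <= h2 d1 d2 s x1 (- (INR d1 * e)).
Proof.
  intros Hd1 He HK Hn1e Hx1.
  rewrite h2_eq_opp_h1, Ropp_involutive.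
  pose proof (h1_neg_near_x2_axis d2 d1 (- s) e (- x1) Hd1 He HK Hn1e ltac:(lra)); lra.
Qed.

Lemma exists_small_scale (K1 K2 D : R) : 1 <= D ->
  exists e, 0 < e /\ 3 * K1 * e * D <= 1 /\ 3 * K2 * e * D <= 1 /\ D * e <= 1.
Proof.
  intros HD.
  assert (HK1 := Rle_abs K1); assert (HK2 := Rle_abs K2).
  pose proof (Rabs_pos K1); pose proof (Rabs_pos K2).
  set (M := Rabs K1 + Rabs K2 + 1) in *.
  set (e := / (3 * D * M)).
  assert (He : 0 < e) by (apply Rinv_0_lt_compat; unfold M; nra).
  assert (HDe : 3 * D * e * M = 1) by (unfold e, M; field; lra).
  assert (Hk : forall K, K <= M -> 3 * K * e * D <= 1).
  { intros K HK; assert (0 <= (M - K) * (3 * D * e)) by (apply Rmult_le_pos; nra); nra. }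
  assert (0 <= (M - 1) * (D * e)) by (apply Rmult_le_pos; unfold M; nra).
  exists e; repeat split; auto; [apply Hk | apply Hk | nra]; unfold M; lra.
Qed.

Theorem lemma3p5 (d1 d2 : nat) (s1 s2 : R) :
  (1 <= d1)%nat -> (1 <= d2)%nat -> 1 < s1 -> s2 < -1 ->
  exists x1 x2 : R, 0 < x1 < 1 /\ -1 < x2 < 0 /\
    h1 d1 d2 s1 x1 x2 = 0 /\ h2 d1 d2 s2 x1 x2 = 0.
Proof.
  intros Hd1 Hd2 Hs1 Hs2.
  assert (Hn1 : 1 <= INR d1) by (apply (le_INR 1); lia).
  assert (Hn2 : 1 <= INR d2) by (apply (le_INR 1); lia).
  destruct (exists_small_scale (h1_remainder_const d1 d2 s1) (h1_remainder_const d2 d1 (- s2))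
              (INR d1 + INR d2) ltac:(lra)) as (e & He & HK1 & HK2 & HDe).
  rewrite Rplus_comm in HK2.
  assert (Hn1e : 0 < INR d1 * e <= 1) by (split; nra).
  assert (Hn2e : 0 < INR d2 * e <= 1) by (split; nra).
  destruct (poincare_miranda (h1 d1 d2 s1) (h2 d1 d2 s2) (INR d2 * e) 1 (-1) (- (INR d1 * e)))
    as (x1 & x2 & [Hx1 Hx2] & Hh1 & Hh2).
  - lra.
  - lra.
  - apply h1_continuous_on_rect; lra.
  - apply h2_continuous_on_rect; lra.
  - intros x2 Hx2; apply h1_neg_near_x2_axis; auto; lra.
  - intros x2 Hx2; apply Rlt_le, h1_pos_at_1; lra.
  - intros x1 Hx1; apply h2_neg_at_minus_1; lra.
  - intros x1 Hx1; apply h2_nonneg_near_x1_axis; auto; lra.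
  - exists x1, x2; repeat split; try lra.
    + destruct (Req_dec x1 1) as [-> | ]; [| lra].
      pose proof (h1_pos_at_1 d1 d2 s1 x2 Hs1 ltac:(lra)); lra.
    + destruct (Req_dec x2 (-1)) as [-> | ]; [| lra].
      pose proof (h2_neg_at_minus_1 d1 d2 s2 x1 Hs2 ltac:(lra)); lra.
Qed.
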